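(* Let $\mathcal{B}=\langle V,F,E\rangle$ be a self-contained finite bipartite graph. Then the output of Algorithm 1 applied to $\mathcal{B}$ with no exogenous vertices ($W=\emptyset$) is unique, i.e. all runs of the algorithm (for all possible choices of minimal self-contained sets) produce the same directed cluster graph.
   Context: $\mathrm{adj}_{\mathcal{B}}(X)$ is the set of vertices adjacent to some vertex of $X$. A set $F'\subseteq F$ is self-contained if $|F'|=|\mathrm{adj}_{\mathcal{B}}(F')|$ and $|F''|\le|\mathrm{adj}_{\mathcal{B}}(F'')|$ for all $F''\subseteq F'$; $\mathcal{B}$ is self-contained if $|F|=|V|$ and $F$ is self-contained; a non-empty self-contained set is minimal self-contained if no non-empty strict subset is self-contained. A directed cluster graph is a pair $\langle\mathcal{V},\mathcal{E}\rangle$ with $\mathcal{V}$ a partition of a vertex set and $\mathcal{E}$ a set of edges $x\to C$ from vertices to clusters. Algorithm 1 (here with $W=\emptyset$): initialize $\mathcal{E}=\emptyset$, $\mathcal{V}=\emptyset$, $\mathcal{B}'=\langle V',F',E'\rangle=\mathcal{B}$. While $\mathcal{B}'$ is not the null graph: choose a minimal self-contained set $S_F\subseteq F'$ of $\mathcal{B}'$; let $C=S_F\cup\mathrm{adj}_{\mathcal{B}'}(S_F)$; add $C$ to $\mathcal{V}$; for each $v\in\mathrm{adj}_{\mathcal{B}}(S_F)\setminus\mathrm{adj}_{\mathcal{B}'}(S_F)$ add $v\to C$ to $\mathcal{E}$; replace $\mathcal{B}'$ by its subgraph induced by $(V'\cup F')\setminus C$. Output $\langle\mathcal{V},\mathcal{E}\rangle$.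 *)

From mathcomp Require Import all_boot.
Set Implicit Arguments. Unset Strict Implicit. Unset Printing Implicit Defensive.

(* A finite bipartite graph B = <V, F, E> is represented inside a finite type T
   by two disjoint sets V F : {set T} and an edge relation E : rel T, where
   E f v means there is an edge between f (in F) and v (in V).            *)

Section Defs.
Variable T : finType.

Definition adj (Vs : {set T}) (E : rel T) (X : {set T}) : {set T} :=
  [set v in Vs | [exists f in X, E f v]].

Definition self_contained_set (Vs Fs : {set T}) (E : rel T) (X : {set T}) : Prop :=
  [/\ X \subset Fs,
      #|X| = #|adj Vs E X| &
      forall Y : {set T}, Y \subset X -> #|Y| <= #|adj Vs E Y|].

Definition minimal_self_contained (Vs Fs : {set T}) (E : rel T) (X : {set T}) : Prop :=
  [/\ X != set0, self_contained_set Vs Fs E X &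
      forall Y : {set T}, Y \proper X -> Y != set0 -> ~ self_contained_set Vs Fs E Y].

Definition bipartite (V F : {set T}) (E : rel T) : Prop :=
  [disjoint V & F] /\ (forall x y, E x y -> x \in F /\ y \in V).

Definition self_contained_graph (V F : {set T}) (E : rel T) : Prop :=
  #|F| = #|V| /\ self_contained_set V F E F.

Definition cluster (Vs : {set T}) (E : rel T) (S : {set T}) : {set T} :=
  S :|: adj Vs E S.

Definition new_edges (V Vs : {set T}) (E : rel T) (S : {set T})
  : {set T * {set T}} :=
  [set (v, cluster Vs E S) | v in adj V E S :\: adj Vs E S].

(* alg_run V E Vs Fs Vc Ec Vo Eo : starting from the current remaining graph
   B' = <Vs, Fs, E restricted> and current directed cluster graph <Vc, Ec>,
   some run of the loop of Algorithm 1 (W = empty) terminates with output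
   <Vo, Eo>.  V is the V-side of the original graph B (used for adj_B). *)
Inductive alg_run (V : {set T}) (E : rel T) :
  {set T} -> {set T} -> {set {set T}} -> {set T * {set T}} ->
  {set {set T}} -> {set T * {set T}} -> Prop :=
| run_done Vc Ec : alg_run V E set0 set0 Vc Ec Vc Ec
| run_step Vs Fs Vc Ec S Vo Eo :
    ~~ ((Vs == set0) && (Fs == set0)) ->
    minimal_self_contained Vs Fs E S ->
    alg_run V E (Vs :\: cluster Vs E S) (Fs :\: cluster Vs E S)
            (cluster Vs E S |: Vc) (Ec :|: new_edges V Vs E S) Vo Eo ->
    alg_run V E Vs Fs Vc Ec Vo Eo.

Definition algorithm1_output (V F : {set T}) (E : rel T)
  (Vo : {set {set T}}) (Eo : {set T * {set T}}) : Prop :=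
  alg_run V E V F set0 set0 Vo Eo.

End Defs.

From mathcomp Require Import all_boot zify.
From Stdlib Require Import Classical.
Set Implicit Arguments. Unset Strict Implicit. Unset Printing Implicit Defensive.

(* Throughout a run the remaining graph B' = <V', F', E> stays a
   self-contained subgraph of B.  Under Hall's condition |X| <= |adj X| on F',
   the function X |-> |adj X| is submodular, so self-contained sets are closed
   under intersection; hence two distinct minimal self-contained sets S1, S2
   are disjoint and have disjoint neighbourhoods.  Removing the cluster of S1
   therefore leaves S2 minimal self-contained, with the same cluster and the
   same new edges: the two choices commute.  Removing a self-contained set
   keeps B' self-contained, so from every such state the algorithm can run to
   completion, and uniqueness of the output follows by the diamond argument,
   by induction on |F'|. *)

Section SelfContainedSets.
Variables (T : finType) (E : rel T).
Implicit Types Vs Fs X Y S : {set T}.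

Lemma adj_subset Vs X : adj Vs E X \subset Vs.
Proof. by apply/subsetP=> v; rewrite inE => /andP[]. Qed.

Lemma adjS Vs X Y : X \subset Y -> adj Vs E X \subset adj Vs E Y.
Proof.
move=> /subsetP sXY; apply/subsetP=> v; rewrite !inE => /andP[-> /existsP[f /andP[fX efv]]].
by apply/existsP; exists f; rewrite sXY.
Qed.

Lemma adjU Vs X Y : adj Vs E (X :|: Y) = adj Vs E X :|: adj Vs E Y.
Proof.
apply/setP=> v; rewrite !inE -andb_orr; congr (_ && _).
apply/existsP/orP=> [[f /andP[]]|[|]/existsP[f /andP[fX efv]]].
- by rewrite inE => /orP[] fXY efv; [left|right]; apply/existsP; exists f; rewrite fXY.
- by exists f; rewrite inE fX.
- by exists f; rewrite inE fX orbT.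
Qed.

Lemma adjI Vs X Y : adj Vs E (X :&: Y) \subset adj Vs E X :&: adj Vs E Y.
Proof. by rewrite subsetI !adjS ?subsetIl ?subsetIr. Qed.

Lemma adj_setD Vs C X : adj (Vs :\: C) E X = adj Vs E X :\: C.
Proof. by apply/setP=> v; rewrite !inE andbA. Qed.

Definition hall Vs Fs : Prop := forall Y, Y \subset Fs -> #|Y| <= #|adj Vs E Y|.

Lemma hall_self_contained_graph Vs Fs :
  #|Fs| = #|Vs| -> hall Vs Fs -> self_contained_graph Vs Fs E.
Proof.
move=> cardFV hallF; split=> //; split=> //.
by have := hallF Fs (subxx _); have := subset_leq_card (adj_subset Vs Fs); lia.
Qed.

Lemma card_adjI_le Vs Fs S1 S2 : hall Vs Fs ->
  self_contained_set Vs Fs E S1 -> self_contained_set Vs Fs E S2 ->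
  #|adj Vs E S1 :&: adj Vs E S2| <= #|S1 :&: S2|.
Proof.
move=> hallF [sS1 tight1 _] [sS2 tight2 _].
have := hallF (S1 :|: S2); rewrite subUset sS1 sS2 adjU => /(_ isT).
have := cardsUI S1 S2; have := cardsUI (adj Vs E S1) (adj Vs E S2); lia.
Qed.

Lemma self_contained_setI Vs Fs S1 S2 : hall Vs Fs ->
  self_contained_set Vs Fs E S1 -> self_contained_set Vs Fs E S2 ->
  self_contained_set Vs Fs E (S1 :&: S2).
Proof.
move=> hallF sc1 sc2; have le_adjI := card_adjI_le hallF sc1 sc2.
case: sc1 => sS1 _ hall1.
have sIF : S1 :&: S2 \subset Fs := subset_trans (subsetIl _ _) sS1.
split=> // [|Y sYI]; last exact/hall1/(subset_trans sYI)/subsetIl.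
by have := hallF _ sIF; have := subset_leq_card (adjI Vs S1 S2); lia.
Qed.

Lemma minimal_self_contained_disjoint Vs Fs S1 S2 : hall Vs Fs ->
  minimal_self_contained Vs Fs E S1 -> minimal_self_contained Vs Fs E S2 ->
  S1 != S2 -> [disjoint S1 & S2] /\ [disjoint adj Vs E S1 & adj Vs E S2].
Proof.
move=> hallF [_ sc1 min1] [_ sc2 min2] neqS.
have scI := self_contained_setI hallF sc1 sc2.
have I0 : S1 :&: S2 = set0.
  apply/eqP/negPn/negP=> nI0.
  have [eqI1|/eqP neqI1] := eqVneq (S1 :&: S2) S1.
    have [eqI2|/eqP neqI2] := eqVneq (S1 :&: S2) S2; first by rewrite -eqI1 eqI2 eqxx in neqS.
    by apply: (min2 _ _ nI0 scI); rewrite properEneq subsetIr andbT; apply/eqP.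
  by apply: (min1 _ _ nI0 scI); rewrite properEneq subsetIl andbT; apply/eqP.
have := card_adjI_le hallF sc1 sc2; rewrite I0 cards0 leqn0 cards_eq0.
by rewrite -!setI_eq0 I0 eqxx.
Qed.

Lemma hall_setD Vs Fs S : hall Vs Fs -> self_contained_set Vs Fs E S ->
  hall (Vs :\: adj Vs E S) (Fs :\: S).
Proof.
move=> hallF [sSF tightS _] Y /subsetDP[sYF disjYS]; rewrite adj_setD.
have := hallF (Y :|: S); rewrite subUset sSF sYF adjU => /(_ isT).
have := cardsUI Y S; rewrite (disjoint_setI0 disjYS) cards0.
have := cardsID (adj Vs E S) (adj Vs E Y :|: adj Vs E S).
by rewrite (setIidPr (subsetUr _ _)) setDUl setDv setU0; lia.
Qed.

Lemma self_contained_graph_setD Vs Fs S :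
  self_contained_graph Vs Fs E -> self_contained_set Vs Fs E S ->
  self_contained_graph (Vs :\: adj Vs E S) (Fs :\: S) E.
Proof.
move=> [cardFV [_ _ hallF]] scS; apply: hall_self_contained_graph (hall_setD hallF scS).
case: scS => sSF tightS _.
by rewrite !cardsDS ?adj_subset // cardFV tightS.
Qed.

Lemma exists_minimal_self_contained Vs Fs X : X != set0 ->
  self_contained_set Vs Fs E X -> exists S, minimal_self_contained Vs Fs E S.
Proof.
move: {2}#|X| (leqnn #|X|) => n; elim: n X => [|n IHn] X leXn nX scX.
  by move: leXn; rewrite leqn0 cards_eq0 (negbTE nX).
have [[Y [ltYX nY scY]]|noY] := classic (exists Y,
  [/\ Y \proper X, Y != set0 & self_contained_set Vs Fs E Y]).
  by apply: (IHn Y) => //; have := proper_card ltYX; lia.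
by exists X; split=> // Y ltYX nY scY; apply: noY; exists Y.
Qed.

Lemma minimal_self_containedW Vs Fs S :
  minimal_self_contained Vs Fs E S -> self_contained_set Vs Fs E S.
Proof. by case. Qed.

Lemma minimal_self_contained_nonnull Vs Fs S :
  minimal_self_contained Vs Fs E S -> ~~ ((Vs == set0) && (Fs == set0)).
Proof.
move=> [nS [sSF _ _] _]; apply/negP=> /andP[_ /eqP Fs0].
by move: sSF; rewrite Fs0 subset0 (negbTE nS).
Qed.

Lemma card_setD_cluster_lt Vs Fs S : minimal_self_contained Vs Fs E S ->
  #|Fs :\: cluster Vs E S| < #|Fs|.
Proof.
move=> [nS [sSF _ _] _].
have : S \subset Fs :&: cluster Vs E S by rewrite subsetI sSF subsetUl.
move/subset_leq_card; rewrite cardsD; have := card_gt0 S; rewrite nS.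
by have := subset_leq_card (subsetIl Fs (cluster Vs E S)); lia.
Qed.

Lemma minimal_self_contained_restrict Vs Fs Vs' Fs' S :
  S \subset Fs' -> (forall Y, Y \subset S -> adj Vs' E Y = adj Vs E Y) ->
  minimal_self_contained Vs Fs E S -> minimal_self_contained Vs' Fs' E S.
Proof.
move=> sSF' eq_adj [nS [sSF tightS hallS] minS]; split=> //.
  by split=> // [|Y sYS]; rewrite eq_adj //; apply: hallS.
move=> Y ltYS nY [_ tightY hallY]; have sYS := proper_sub ltYS.
apply: (minS Y ltYS nY); split; first exact: subset_trans sYS sSF.
  by rewrite -eq_adj.
by move=> Z sZY; rewrite -eq_adj; [apply: hallY | apply: subset_trans sZY sYS].
Qed.

End SelfContainedSets.

Section BipartiteRuns.
Variables (T : finType) (V F : {set T}) (E : rel T).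
Hypothesis disjVF : [disjoint V & F].
Hypothesis edgeFV : forall f v, E f v -> f \in F /\ v \in V.
Implicit Types Vs Fs X Y S : {set T}.

Definition self_contained_subgraph Vs Fs : Prop :=
  [/\ Vs \subset V, Fs \subset F & self_contained_graph Vs Fs E].

Lemma adj_subV Vs X : adj Vs E X \subset V.
Proof. by apply/subsetP=> v; rewrite inE => /andP[_ /existsP[f /andP[_ /edgeFV[]]]]. Qed.

Lemma setD_clusterV Vs S : Vs \subset V -> S \subset F ->
  Vs :\: cluster Vs E S = Vs :\: adj Vs E S.
Proof.
move=> sVsV sSF; rewrite setDUr (setDidPl _) ?(setIidPr _) ?subsetDl //.
by rewrite (disjointWl sVsV) // disjoint_sym (disjointWl sSF) // disjoint_sym.
Qed.

Lemma setD_clusterF Vs Fs S : Fs \subset F -> Fs :\: cluster Vs E S = Fs :\: S.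
Proof.
move=> sFsF; rewrite setDUr [Fs :\: adj _ _ _](setDidPl _) ?(setIidPl _) ?subsetDl //.
by rewrite disjoint_sym (disjointWl (adj_subV _ _)) // (disjointWr sFsF).
Qed.

Lemma self_contained_subgraph_setD Vs Fs S :
  self_contained_subgraph Vs Fs -> self_contained_set Vs Fs E S ->
  self_contained_subgraph (Vs :\: cluster Vs E S) (Fs :\: cluster Vs E S).
Proof.
move=> [sVsV sFsF scG] scS.
have sSF : S \subset F by case: scS => sSFs _ _; apply: subset_trans sFsF.
rewrite setD_clusterV // setD_clusterF //.
by split; [exact: subset_trans (subsetDl _ _) sVsV
          | exact: subset_trans (subsetDl _ _) sFsF
          | exact: self_contained_graph_setD].
Qed.

Lemma minimal_self_contained_after_step Vs Fs S1 S2 :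
  self_contained_subgraph Vs Fs ->
  minimal_self_contained Vs Fs E S1 -> minimal_self_contained Vs Fs E S2 -> S1 != S2 ->
  [/\ minimal_self_contained (Vs :\: cluster Vs E S1) (Fs :\: cluster Vs E S1) E S2,
      cluster (Vs :\: cluster Vs E S1) E S2 = cluster Vs E S2 &
      new_edges V (Vs :\: cluster Vs E S1) E S2 = new_edges V Vs E S2].
Proof.
move=> [_ sFsF [_ [_ _ hallF]]] msc1 msc2 neqS.
have [disjS disjA] := minimal_self_contained_disjoint hallF msc1 msc2 neqS.
have sS1F : S1 \subset F by case: msc1 => _ [sS1Fs _ _] _; apply: subset_trans sFsF.
have sS2Fs : S2 \subset Fs by case: msc2 => _ [].
have adj_step Y : Y \subset S2 -> adj (Vs :\: cluster Vs E S1) E Y = adj Vs E Y.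
  move=> sYS2; rewrite adj_setD setDUr !(setDidPl _) ?setIid //.
    by apply: disjointWl (adjS _ _ sYS2) _; rewrite disjoint_sym.
  by apply: disjointWl (adj_subV Vs Y) _; apply: disjointWr sS1F disjVF.
have sS2Fs' : S2 \subset Fs :\: cluster Vs E S1.
  by rewrite setD_clusterF //; apply/subsetDP; rewrite disjoint_sym.
split; first exact: minimal_self_contained_restrict sS2Fs' adj_step msc2.
- by rewrite /cluster adj_step.
- by rewrite /new_edges /cluster adj_step.
Qed.

Lemma alg_run_null Vs Fs Vc Ec : self_contained_subgraph Vs Fs -> Fs = set0 ->
  alg_run V E Vs Fs Vc Ec Vc Ec.
Proof.
move=> [_ _ [cardFV _]] Fs0; have /cards0_eq Vs0 : #|Vs| = 0 by rewrite -cardFV Fs0 cards0.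
by rewrite Fs0 Vs0; apply: run_done.
Qed.

Lemma alg_run_exists Vs Fs Vc Ec : self_contained_subgraph Vs Fs ->
  exists Vo Eo, alg_run V E Vs Fs Vc Ec Vo Eo.
Proof.
move: {2}#|Fs| (leqnn #|Fs|) => n.
elim: n Vs Fs Vc Ec => [|n IHn] Vs Fs Vc Ec leFn scG.
  by exists Vc, Ec; apply: alg_run_null scG _; apply/cards0_eq; lia.
have [Fs0|nFs] := eqVneq Fs set0; first by exists Vc, Ec; apply: alg_run_null.
have [S mscS] : exists S, minimal_self_contained Vs Fs E S.
  by case: scG => _ _ [_ scF]; apply: exists_minimal_self_contained nFs scF.
have scG' := self_contained_subgraph_setD scG (minimal_self_containedW mscS).
have leFn' : #|Fs :\: cluster Vs E S| <= n by have := card_setD_cluster_lt mscS; lia.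
have [Vo [Eo run]] := IHn _ _ (cluster Vs E S |: Vc) (Ec :|: new_edges V Vs E S) leFn' scG'.
by exists Vo, Eo; apply: run_step (minimal_self_contained_nonnull mscS) mscS run.
Qed.

Lemma alg_run_second_step Vs Fs Vc Ec S1 S2 Vo Eo :
  self_contained_subgraph Vs Fs ->
  minimal_self_contained Vs Fs E S1 -> minimal_self_contained Vs Fs E S2 -> S1 != S2 ->
  let C12 := cluster Vs E S1 :|: cluster Vs E S2 in
  alg_run V E (Vs :\: C12) (Fs :\: C12) (cluster Vs E S2 |: (cluster Vs E S1 |: Vc))
    (Ec :|: new_edges V Vs E S1 :|: new_edges V Vs E S2) Vo Eo ->
  alg_run V E (Vs :\: cluster Vs E S1) (Fs :\: cluster Vs E S1) (cluster Vs E S1 |: Vc)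
    (Ec :|: new_edges V Vs E S1) Vo Eo.
Proof.
move=> scG msc1 msc2 neqS C12 run12.
have [msc2' eqC2 eqN2] := minimal_self_contained_after_step scG msc1 msc2 neqS.
apply: run_step (minimal_self_contained_nonnull msc2') msc2' _.
by rewrite eqC2 eqN2 !setDDl.
Qed.

Lemma alg_run_diamond Vs Fs Vc Ec S1 S2 : self_contained_subgraph Vs Fs ->
  minimal_self_contained Vs Fs E S1 -> minimal_self_contained Vs Fs E S2 -> S1 != S2 ->
  exists Vo Eo,
    alg_run V E (Vs :\: cluster Vs E S1) (Fs :\: cluster Vs E S1) (cluster Vs E S1 |: Vc)
      (Ec :|: new_edges V Vs E S1) Vo Eo /\
    alg_run V E (Vs :\: cluster Vs E S2) (Fs :\: cluster Vs E S2) (cluster Vs E S2 |: Vc)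
      (Ec :|: new_edges V Vs E S2) Vo Eo.
Proof.
move=> scG msc1 msc2 neqS.
have scG12 : self_contained_subgraph (Vs :\: (cluster Vs E S1 :|: cluster Vs E S2))
                                     (Fs :\: (cluster Vs E S1 :|: cluster Vs E S2)).
  have [msc2' eqC2 _] := minimal_self_contained_after_step scG msc1 msc2 neqS.
  have scG1 := self_contained_subgraph_setD scG (minimal_self_containedW msc1).
  have := self_contained_subgraph_setD scG1 (minimal_self_containedW msc2').
  by rewrite eqC2 !setDDl.
have [Vo [Eo run12]] := alg_run_exists (cluster Vs E S2 |: (cluster Vs E S1 |: Vc))
  (Ec :|: new_edges V Vs E S1 :|: new_edges V Vs E S2) scG12.
exists Vo, Eo; split; first exact: alg_run_second_step run12.
apply: alg_run_second_step msc2 msc1 _ _ => //; first by rewrite eq_sym.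
by rewrite setUC setUCA setUAC.
Qed.

Lemma alg_run_inv Vs Fs Vc Ec Vo Eo : alg_run V E Vs Fs Vc Ec Vo Eo ->
  if Fs == set0 then Vo = Vc /\ Eo = Ec else
  exists2 S, minimal_self_contained Vs Fs E S &
    alg_run V E (Vs :\: cluster Vs E S) (Fs :\: cluster Vs E S) (cluster Vs E S |: Vc)
      (Ec :|: new_edges V Vs E S) Vo Eo.
Proof.
case=> [|{}Vs {}Fs {}Vc {}Ec S {}Vo {}Eo _ mscS run]; first by rewrite eqxx.
have [nS [sSF _ _] _] := mscS; case: eqP => [Fs0|_]; last by exists S.
by move: sSF; rewrite Fs0 subset0 (negbTE nS).
Qed.

Lemma alg_run_unique Vs Fs Vc Ec Vo1 Eo1 Vo2 Eo2 : self_contained_subgraph Vs Fs ->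
  alg_run V E Vs Fs Vc Ec Vo1 Eo1 -> alg_run V E Vs Fs Vc Ec Vo2 Eo2 ->
  Vo1 = Vo2 /\ Eo1 = Eo2.
Proof.
move: {2}#|Fs| (leqnn #|Fs|) => n.
elim: n Vs Fs Vc Ec Vo1 Eo1 Vo2 Eo2 => [|n IHn] Vs Fs Vc Ec Vo1 Eo1 Vo2 Eo2 leFn scG
  /alg_run_inv run1 /alg_run_inv run2; case: eqP run1 run2 => [_ [-> ->] [-> ->] //|_].
  by move=> [S1 msc1 _] _; have := card_setD_cluster_lt msc1; lia.
move=> [S1 msc1 run1] [S2 msc2 run2].
have scG1 := self_contained_subgraph_setD scG (minimal_self_containedW msc1).
have le1 : #|Fs :\: cluster Vs E S1| <= n by have := card_setD_cluster_lt msc1; lia.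
have [eqS|neqS] := eqVneq S1 S2; first by rewrite -eqS in run2; apply: IHn le1 scG1 run1 run2.
have scG2 := self_contained_subgraph_setD scG (minimal_self_containedW msc2).
have le2 : #|Fs :\: cluster Vs E S2| <= n by have := card_setD_cluster_lt msc2; lia.
have [Vo [Eo [run1' run2']]] := alg_run_diamond Vc Ec scG msc1 msc2 neqS.
have [-> ->] := IHn _ _ _ _ _ _ _ _ le1 scG1 run1 run1'.
by have [-> ->] := IHn _ _ _ _ _ _ _ _ le2 scG2 run2 run2'.
Qed.

End BipartiteRuns.

Theorem lemma34 (T : finType) (V F : {set T}) (E : rel T)
  (Vo1 Vo2 : {set {set T}}) (Eo1 Eo2 : {set T * {set T}}) :
  bipartite V F E ->
  self_contained_graph V F E ->
  algorithm1_output V F E Vo1 Eo1 ->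
  algorithm1_output V F E Vo2 Eo2 ->
  Vo1 = Vo2 /\ Eo1 = Eo2.
Proof.
move=> [disjVF edgeFV] scG.
exact: (alg_run_unique disjVF edgeFV (And3 (subxx V) (subxx F) scG)).
Qed.
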